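(* Let $N$ be a finite set with $|N|\ge 2$. An inequality $\langle o,\eta\rangle\le u$, with $o\in\mathbb{R}^{\Upsilon}$ and $u\in\mathbb{R}$, is valid for all $\eta\in P_N$ and tight at every full graph over $N$ (i.e. $\langle o,\eta_H\rangle=u$ for each full graph $H$) if and only if there is a standardized supermodular set function $m:\mathcal{P}(N)\to\mathbb{R}$ such that $o(a|B)=m(\{a\}\cup B)-m(B)$ for all $a\in N$, $B\subseteq N\setminus\{a\}$, and $u$ is the common value of $\langle o,\eta_H\rangle$ over full graphs $H$. Moreover, this correspondence between such inequalities and standardized supermodular functions is one-to-one and preserves conic combinations.
   Context: $\mathrm{DAG}(N)$ is the set of acyclic directed graphs over $N$; $\mathrm{pa}_G(a)$ is the parent set of $a$ in $G$. A full graph is an acyclic directed graph over $N$ in which every pair of distinct nodes is adjacent. $\Upsilon=\{(a|B): a\in N,\ \emptyset\neq B\subseteq N\setminus\{a\}\}$; $\eta_G\in\mathbb{R}^{\Upsilon}$ has $\eta_G(a|B)=1$ if $B=\mathrm{pa}_G(a)$, else $0$; $P_N=\mathrm{conv}\{\eta_G:G\in\mathrm{DAG}(N)\}$. Convention: $o(b|\emptyset)=0$. A set function $m:\mathcal{P}(N)\to\mathbb{R}$ is standardized if $m(S)=0$ for $|S|\le1$, and supermodular if $m(U)+m(V)\le m(U\cup V)+m(U\cap V)$ for all $U,V\subseteq N$. *)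

From HB Require Import structures.
From mathcomp Require Import all_boot all_order all_algebra.
Set Implicit Arguments. Unset Strict Implicit. Unset Printing Implicit Defensive.
Import Order.TTheory GRing.Theory Num.Theory.
Local Open Scope ring_scope.

Section Defs.
Variable N : finType.

(* A directed graph over N, given by its parent sets: pa G a = pa_G(a). *)
Definition graph := {ffun N -> {set N}}.

Definition edge (G : graph) : rel N := fun x y => x \in G y.

Definition acyclic (G : graph) : bool :=
  [forall x, ~~ [exists y, edge G x y && connect (edge G) y x]].

Definition full_graph (G : graph) : bool :=
  acyclic G && [forall a, forall b, (a != b) ==> (edge G a b || edge G b a)].

Definition ups_pred (p : N * {set N}) : bool := (p.2 != set0) && (p.1 \notin p.2).
Definition Ups : finType := {p : N * {set N} | ups_pred p}.

Definition ups_node (v : Ups) : N := (val v).1.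
Definition ups_set (v : Ups) : {set N} := (val v).2.

Variable R : realFieldType.

Definition eta (G : graph) : {ffun Ups -> R} :=
  [ffun v => if G (ups_node v) == ups_set v then 1 else 0].

Definition dot (o eta' : {ffun Ups -> R}) : R := \sum_(v : Ups) o v * eta' v.

Definition in_PN (e : {ffun Ups -> R}) : Prop :=
  exists lam : graph -> R,
    (forall G, 0 <= lam G) /\
    (forall G, ~~ acyclic G -> lam G = 0) /\
    \sum_(G : graph | acyclic G) lam G = 1 /\
    e = [ffun v => \sum_(G : graph | acyclic G) lam G * eta G v].

Definition valid_ineq (o : {ffun Ups -> R}) (u : R) : Prop :=
  forall e, in_PN e -> dot o e <= u.

Definition tight_full (o : {ffun Ups -> R}) (u : R) : Prop :=
  forall H : graph, full_graph H -> dot o (eta H) = u.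

Definition standardized (m : {ffun {set N} -> R}) : Prop :=
  forall S : {set N}, (#|S| <= 1)%N -> m S = 0.

Definition supermodular (m : {ffun {set N} -> R}) : Prop :=
  forall U V : {set N}, m U + m V <= m (U :|: V) + m (U :&: V).

Definition corr (o : {ffun Ups -> R}) (u : R) (m : {ffun {set N} -> R}) : Prop :=
  (forall v : Ups, o v = m (ups_node v |: ups_set v) - m (ups_set v)) /\
  (forall H : graph, full_graph H -> u = dot o (eta H)).

End Defs.

From Pilot Require Import Defs.
From HB Require Import structures.
From mathcomp Require Import all_boot all_order all_algebra.
From mathcomp Require Import zify lra.
Import Order.TTheory GRing.Theory Num.Theory.
Set Implicit Arguments. Unset Strict Implicit. Unset Printing Implicit Defensive.

(** Full graphs are the graphs of linear orders, encoded here by injective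
    ranks [r : N -> nat].  If [o(a|B) = m({a} u B) - m(B)], then [<o, eta_G>]
    telescopes to [m(N)] along every linear order, and for an arbitrary acyclic
    [G] peeling off sinks bounds it by [m(N)] thanks to supermodularity; as
    [P_N] is the convex hull of the [eta_G], the inequality is valid.
    Conversely, for a valid inequality tight at full graphs, let [m(S)] be the
    part of [<o, eta_H>] contributed by the nodes of [S], where [H] is any
    order listing [S] first: tightness makes this independent of [H] and
    yields the increment formula.  Supermodularity at [U, V] is validity at
    the intersection of the orders listing [U :&: V, U, V] and
    [U :&: V, V, U]. *)

Lemma ltn_mixed_radix (n a b i j : nat) : i < n -> j < n ->
  (a * n + i < b * n + j) = (a < b) || (a == b) && (i < j).
Proof.
move=> hi hj; case: (ltngtP a b) => hab /=.
- apply/idP; have : a.+1 * n <= b * n by rewrite leq_mul2r hab orbT.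
  rewrite mulSn; lia.
- apply/negbTE; rewrite -leqNgt; have : b.+1 * n <= a * n by rewrite leq_mul2r hab orbT.
  rewrite mulSn; lia.
- by rewrite hab ltn_add2l.
Qed.

Section Ranks.
Variable N : finType.
Implicit Types (r f : N -> nat) (S A : {set N}) (G : graph N).

Definition lower r (a : N) : {set N} := [set x | r x < r a].

Definition ranked_graph r : graph N := [ffun a => lower r a].

Definition initial r S := forall x y, x \in S -> y \notin S -> r x < r y.

Lemma lower_sub r S a : initial r S -> a \in S -> lower r a \subset S :\ a.
Proof.
move=> hS ha; apply/subsetP => x; rewrite !inE => hxa.
rewrite andbC; case: (boolP (x \in S)) => /= [_|hx].
  by apply: contraTneq hxa => ->; rewrite ltnn.
by move: (hS _ _ ha hx); rewrite ltnNge (ltnW hxa).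
Qed.

Lemma acyclic_ranked r G : (forall x y, x \in G y -> r x < r y) -> acyclic G.
Proof.
move=> hr.
have up p z : path (edge G) z p -> r z <= r (last z p).
  elim: p z => //= y p IH z /andP [hzy hp].
  exact: leq_trans (ltnW (hr _ _ hzy)) (IH _ hp).
apply/forallP => x; apply/negP => /existsP [y /andP [hxy /connectP [p hp ey]]].
by have := up _ _ hp; rewrite -ey leqNgt (hr _ _ hxy).
Qed.

Lemma full_ranked_graph r : injective r -> full_graph (ranked_graph r).
Proof.
move=> ir; apply/andP; split.
  by apply: (@acyclic_ranked r) => x y; rewrite ffunE inE.
apply/forallP => a; apply/forallP => b; apply/implyP => nab.
rewrite /edge !ffunE !inE; case: ltngtP => // /ir eab.
by rewrite eab eqxx in nab.
Qed.

Definition enum_index (x : N) : nat := enum_rank x.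

Lemma enum_index_inj : injective enum_index.
Proof. by move=> x y /val_inj /enum_rank_inj. Qed.

Definition lexrank f (x : N) : nat := f x * #|N| + enum_rank x.

Lemma lexrank_lt f x y :
  (lexrank f x < lexrank f y) = (f x < f y) || (f x == f y) && (enum_rank x < enum_rank y).
Proof. by rewrite /lexrank ltn_mixed_radix //; apply: ltn_ord. Qed.

Lemma lexrank_inj f : injective (lexrank f).
Proof.
move=> x y exy; apply: enum_rank_inj; apply/val_inj/eqP.
have := lexrank_lt f x y; have := lexrank_lt f y x; rewrite exy ltnn.
case: (ltngtP (f y) (f x)) => //= _ hyx hxy.
by rewrite eqn_leq leqNgt -hyx leqNgt -hxy.
Qed.

Lemma lexrank_initial f S :
  (forall x y, x \in S -> y \notin S -> f x < f y) -> initial (lexrank f) S.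
Proof. by move=> hf x y hx hy; rewrite lexrank_lt hf. Qed.

Definition chain_rank (s : seq {set N}) (x : N) : nat := \sum_(A <- s) (x \notin A).

Lemma chain_rank_initial (s : seq {set N}) A :
  sorted (fun B C : {set N} => B \subset C) s -> A \in s ->
  initial (lexrank (chain_rank s)) A.
Proof.
move=> hs hA; have sub_tr : transitive (fun B C : {set N} => B \subset C).
  by move=> B C D; apply: subset_trans.
have hcmp B : B \in s -> (B \subset A) || (A \subset B).
  move=> hB; case: (ltngtP (index B s) (index A s)) => hBA.
  - by rewrite (sorted_ltn_index sub_tr hs _ _ hB hA hBA).
  - by rewrite (sorted_ltn_index sub_tr hs _ _ hA hB hBA) orbT.
  - by rewrite -(nth_index A hB) hBA nth_index ?subxx.
apply: lexrank_initial => x y hx hy.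
rewrite /chain_rank !(big_rem A hA) /= hx hy /= add0n add1n ltnS.
rewrite !big_seq; apply: leq_sum => B /mem_rem hB.
case/orP: (hcmp B hB) => /subsetP hsub; last by rewrite hsub.
by rewrite (contra (hsub y) hy) leq_b1.
Qed.

Lemma acyclic_irrefl G a : acyclic G -> a \notin G a.
Proof.
move/forallP/(_ a) => h; apply/negP => ha; move/existsP: h; apply.
by exists a; rewrite /edge ha connect0.
Qed.

Lemma acyclic_sink G S :
  acyclic G -> S != set0 -> exists2 w, w \in S & forall x, x \in S -> w \notin G x.
Proof.
move=> hac /set0Pn [x0 hx0].
pose reach y := [set z | connect (edge G) y z].
case: (@arg_minnP _ x0 (mem S) (fun y => #|reach y|) hx0) => w hw hmin.
exists w => // x hx; apply/negP => hwx.
have := hmin x hx; rewrite leqNgt => /negP; apply; apply: proper_card.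
apply/properP; split.
  apply/subsetP => z; rewrite !inE => hz.
  exact: connect_trans (connect1 _) hz.
exists w; rewrite !inE ?connect0 //.
apply/negP => hxw; move/forallP/(_ w): hac => /existsP; apply.
by exists x; rewrite /edge hwx hxw.
Qed.

End Ranks.

Section Coefficients.
Variables (N : finType) (R : realFieldType).
Implicit Types (o : {ffun Ups N -> R}) (G : graph N) (a : N) (B : {set N}).
Local Open Scope ring_scope.

(* [o] extended by [0] outside [Ups], matching the convention [o(b|set0) = 0]. *)
Definition coef o a B : R := if insub (a, B) is Some v then o v else 0.

Lemma coefE o a B : coef o a B = \sum_(v : Ups N | val v == (a, B)) o v.
Proof.
rewrite /coef; case: insubP => [v _ <-|hn]; first by rewrite (big_pred1 v) // => w; rewrite val_eqE.
by rewrite big_pred0 // => v; apply: contraNF hn => /eqP <-; apply: valP.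
Qed.

Lemma coef_set0 o a : coef o a set0 = 0.
Proof. by rewrite /coef insubF // /ups_pred eqxx. Qed.

Lemma coef_ups o (v : Ups N) : coef o (ups_node v) (ups_set v) = o v.
Proof. by rewrite /coef /ups_node /ups_set -surjective_pairing valK. Qed.

Lemma dot_eta o G : dot o (Defs.eta R G) = \sum_a coef o a (G a).
Proof.
rewrite /dot (partition_big (@ups_node N) xpredT) //=; apply: eq_big => // a _.
rewrite coefE big_mkcond [RHS]big_mkcond; apply: eq_bigr => v _.
rewrite ffunE /ups_node /ups_set; case: (val v) => x B /=.
rewrite xpair_eqE; case: eqP => [->|] //=.
by rewrite eq_sym; case: eqP; rewrite ?mulr1 ?mulr0.
Qed.

Lemma eta_in_PN G : acyclic G -> in_PN (Defs.eta R G).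
Proof.
move=> hG; exists (fun H => (H == G)%:R); split=> [H|]; first exact: ler0n.
split=> [H|]; first by case: eqP => [->|//]; rewrite hG.
split; first by rewrite (bigD1 G) //= eqxx big1 ?addr0 // => H /andP [_ /negbTE ->].
apply/ffunP => v; rewrite [RHS]ffunE (bigD1 G) //= eqxx mul1r big1 ?addr0 //.
by move=> H /andP [_ /negbTE ->]; rewrite mul0r.
Qed.

Lemma valid_ineq_vertices o (u : R) :
  (forall G, acyclic G -> dot o (Defs.eta R G) <= u) -> valid_ineq o u.
Proof.
move=> hG e [lam [lam_ge0 [_ [lam_sum ->]]]].
have -> : dot o [ffun v => \sum_(G | acyclic G) lam G * Defs.eta R G v] =
          \sum_(G | acyclic G) lam G * dot o (Defs.eta R G).
  rewrite /dot; under eq_bigr do rewrite ffunE mulr_sumr.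
  rewrite exchange_big; apply: eq_bigr => G _; rewrite mulr_sumr.
  by apply: eq_bigr => v _; rewrite mulrCA.
rewrite -[u]mul1r -lam_sum mulr_suml; apply: ler_sum => G hac.
by rewrite ler_wpM2l ?hG.
Qed.

End Coefficients.

Section Increments.
Variables (N : finType) (R : realFieldType) (m : {ffun {set N} -> R}).
Implicit Types (o : {ffun Ups N -> R}) (G : graph N) (B S : {set N}).
Local Open Scope ring_scope.
Hypothesis m_std : standardized m.

Definition incr (a : N) S : R := m (a |: S) - m S.

Lemma coef_incr o a B :
  (forall v, o v = incr (ups_node v) (ups_set v)) -> a \notin B -> coef o a B = incr a B.
Proof.
move=> ho ha; have [->|hB] := eqVneq B set0.
  by rewrite coef_set0 /incr setU0 !m_std ?cards1 ?cards0 ?subrr.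
have hv : ups_pred (a, B) by rewrite /ups_pred hB ha.
by rewrite /coef insubT ho.
Qed.

Lemma dot_eta_incr o G : acyclic G ->
  (forall v, o v = incr (ups_node v) (ups_set v)) ->
  dot o (Defs.eta R G) = \sum_a incr a (G a).
Proof.
by move=> hG ho; rewrite dot_eta; apply: eq_bigr => a _; rewrite coef_incr ?acyclic_irrefl.
Qed.

Lemma sum_incr_le G S : supermodular m -> acyclic G ->
  (forall a, a \in S -> G a \subset S) -> \sum_(a in S) incr a (G a) <= m S.
Proof.
move=> m_sup hG; move: {2}#|S| (leqnn #|S|) => n; elim: n S => [|n IH] S hSn hS.
  by move: hSn; rewrite leqn0 cards_eq0 => /eqP ->; rewrite big_set0 m_std ?cards0.
have [->|S0] := eqVneq S set0; first by rewrite big_set0 m_std ?cards0.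
have [w hw w_sink] := acyclic_sink hG S0.
have hGw := hS w hw.
have hSw a : a \in S :\ w -> G a \subset S :\ w.
  move=> /setD1P [_ ha]; apply/subsetP => z hz; rewrite !inE (subsetP (hS a ha)) // andbT.
  by apply: contraNneq (w_sink a ha) => <-.
have hSwn : (#|S :\ w| <= n)%N by move: hSn; rewrite (cardsD1 w S) hw.
have hU : (w |: G w) :|: (S :\ w) = S by rewrite setUAC setD1K // (setUidPl hGw).
have hI : (w |: G w) :&: (S :\ w) = G w.
  apply/setP => z; rewrite !inE; case: eqP => [->|_] /=.
    by rewrite (negbTE (acyclic_irrefl w hG)).
  by case: (boolP (z \in G w)) => // /(subsetP hGw).
(* Supermodularity bounds the increment at the sink [w] by [m S - m (S :\ w)]. *)
have := m_sup (w |: G w) (S :\ w); rewrite hU hI.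
have := IH _ hSwn hSw; rewrite (big_setD1 w hw) /= /incr; lra.
Qed.

Lemma sum_incr_enum_rank :
  \sum_a incr a (lower (@enum_index N) a) = m setT.
Proof.
pose h i := m [set x | (enum_rank x < i)%N].
have step a : incr a (lower (@enum_index N) a) = h (enum_rank a).+1 - h (enum_rank a).
  rewrite /incr /h /lower; congr (m _ - m _); apply/setP => x.
  by rewrite !inE ltnS [RHS]leq_eqVlt -(inj_eq (@enum_index_inj N)).
under eq_bigr do rewrite step.
have -> : \sum_(a : N) (h (enum_rank a).+1 - h (enum_rank a)) = \sum_(i < #|N|) (h i.+1 - h i).
  by rewrite [RHS](reindex enum_rank) //; apply: onW_bij; exact: enum_rank_bij.
rewrite -(big_mkord xpredT (fun i => h i.+1 - h i)) telescope_sumr //.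
have -> : h #|N| = m setT by congr (m _); apply/setP => x; rewrite !inE; exact: ltn_ord.
have -> : h 0%N = m set0 by congr (m _); apply/setP => x; rewrite !inE.
by rewrite (m_std (S := set0)) ?cards0 ?subr0.
Qed.

Lemma corr_valid_tight o (u : R) :
  supermodular m -> corr o u m -> valid_ineq o u /\ tight_full o u.
Proof.
move=> m_sup [ho hu]; split; last by move=> H hH; rewrite -hu.
have hfull := full_ranked_graph (@enum_index_inj N).
have u_top : u = m setT.
  rewrite (hu _ hfull) (dot_eta_incr _ ho); last by case/andP: hfull.
  by rewrite -sum_incr_enum_rank; apply: eq_bigr => a _; rewrite ffunE.
apply: valid_ineq_vertices => G hG; rewrite (dot_eta_incr hG ho) u_top.
rewrite (eq_bigl (mem [set: N])); last by move=> a; rewrite /= in_setT.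
by apply: sum_incr_le => // a _; apply: subsetT.
Qed.

End Increments.

Section FromInequality.
Variables (N : finType) (R : realFieldType) (o : {ffun Ups N -> R}) (u : R).
Implicit Types (r : N -> nat) (S : {set N}).
Local Open Scope ring_scope.

Definition lower_sum r S : R := \sum_(a in S) coef o a (lower r a).

Definition ineq_setfun : {ffun {set N} -> R} :=
  [ffun S => lower_sum (lexrank (chain_rank [:: S])) S].

Hypothesis o_tight : tight_full o u.

Lemma sum_coef_lower r : injective r -> \sum_a coef o a (lower r a) = u.
Proof.
move=> ir; rewrite -(o_tight (full_ranked_graph ir)) dot_eta.
by apply: eq_bigr => a _; rewrite ffunE.
Qed.

Lemma lower_sum_outside r1 r2 S : injective r1 -> injective r2 ->
  (forall a, a \notin S -> lower r1 a = lower r2 a) -> lower_sum r1 S = lower_sum r2 S.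
Proof.
move=> ir1 ir2 hout; have := sum_coef_lower ir2; rewrite -(sum_coef_lower ir1).
rewrite (bigID (mem S)) [in RHS](bigID (mem S)) /=.
by rewrite (eq_bigr _ (fun a ha => congr1 _ (hout a ha))) => /addIr.
Qed.

Lemma lower_sum_initial r S : injective r -> initial r S -> lower_sum r S = ineq_setfun S.
Proof.
(* [r2] orders [S] like [r] and its complement like the reference rank. *)
move=> ir hS; pose M := (\max_x r x).+1.
pose r2 := lexrank (fun x => if x \in S then r x else M).
have r_lt_M x : (r x < M)%N by rewrite ltnS leq_bigmax.
have inside a : a \in S -> lower r a = lower r2 a.
  move=> ha; apply/setP => x; rewrite !inE lexrank_lt ha.
  case: (boolP (x \in S)) => hx; last first.
    by rewrite ltnNge ltnW ?hS // gtn_eqF ?r_lt_M // ltnNge ltnW ?r_lt_M.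
  case: (eqVneq x a) => [->|nxa]; first by rewrite !ltnn andbF.
  by rewrite (inj_eq ir) (negbTE nxa) andFb orbF.
have outside a : a \notin S -> lower r2 a = lower (lexrank (chain_rank [:: S])) a.
  move=> ha; apply/setP => x; rewrite !inE !lexrank_lt /chain_rank !big_seq1 (negbTE ha).
  by case: (boolP (x \in S)) => hx; rewrite ?r_lt_M ?ltnn ?eqxx.
rewrite /lower_sum (eq_bigr _ (fun a ha => congr1 _ (inside a ha))) ffunE.
by apply: lower_sum_outside => //; apply: lexrank_inj.
Qed.

Lemma ineq_setfun_std : standardized ineq_setfun.
Proof.
move=> S hS; rewrite ffunE /lower_sum big1 // => a ha.
have Sa0 : S :\ a = set0.
  by apply/eqP; rewrite -cards_eq0; move: hS; rewrite (cardsD1 a S) ha add1n ltnS leqn0.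
have hinit : initial (lexrank (chain_rank [:: S])) S.
  by apply: chain_rank_initial; rewrite ?mem_seq1.
have /eqP -> : lower (lexrank (chain_rank [:: S])) a == set0 by rewrite -subset0 -Sa0 lower_sub.
exact: coef_set0.
Qed.

Lemma ineq_setfun_incr v :
  o v = ineq_setfun (ups_node v |: ups_set v) - ineq_setfun (ups_set v).
Proof.
rewrite -coef_ups; case: v => [[a B] hv]; have /andP [_ ha] : (B != set0) && (a \notin B) := hv.
rewrite /ups_node /ups_set /=.
pose r := lexrank (chain_rank [:: B; a |: B]).
have hs : sorted (fun C D : {set N} => C \subset D) [:: B; a |: B] by rewrite /= subsetUr.
have iB : initial r B by apply: chain_rank_initial; rewrite ?mem_head.
have iaB : initial r (a |: B) by apply: chain_rank_initial; rewrite // !inE eqxx orbT.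
have lower_a : lower r a = B.
  apply/eqP; rewrite eqEsubset; apply/andP; split.
    by rewrite -{1}(setU1K ha) lower_sub // setU11.
  by apply/subsetP => x hx; rewrite inE iB.
rewrite -(lower_sum_initial (@lexrank_inj _ _) iB) -(lower_sum_initial (@lexrank_inj _ _) iaB).
by rewrite /lower_sum big_setU1 //= lower_a addrK.
Qed.

Lemma ineq_setfun_super : valid_ineq o u -> supermodular ineq_setfun.
Proof.
move=> o_valid U V.
pose r := lexrank (chain_rank [:: U :&: V; U; U :|: V]).
pose r' := lexrank (chain_rank [:: U :&: V; V; U :|: V]).
have hs : sorted (fun C D : {set N} => C \subset D) [:: U :&: V; U; U :|: V].
  by rewrite /= subsetIl subsetUl.
have hs' : sorted (fun C D : {set N} => C \subset D) [:: U :&: V; V; U :|: V].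
  by rewrite /= subsetIr subsetUr.
pose G : graph N := [ffun a => lower r a :&: lower r' a].
have hG : acyclic G by apply: (@acyclic_ranked _ r) => x y; rewrite ffunE !inE => /andP [].
have G_lower a : G a = if a \in V :\: U then lower r' a else lower r a.
  rewrite ffunE !inE; case hu : (a \in U); case hv : (a \in V) => /=;
  apply/setP => x; rewrite !inE !lexrank_lt /chain_rank !big_cons !big_nil !inE hu hv /=;
  by case: (x \in U); case: (x \in V); rewrite /= ?andbb.
have ir := @lexrank_inj N (chain_rank [:: U :&: V; U; U :|: V]).
have ir' := @lexrank_inj N (chain_rank [:: U :&: V; V; U :|: V]).
have <- : lower_sum r U = ineq_setfun U.
  by apply: lower_sum_initial => //; apply: chain_rank_initial; rewrite // !inE eqxx orbT.
have <- : lower_sum r (U :|: V) = ineq_setfun (U :|: V).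
  by apply: lower_sum_initial => //; apply: chain_rank_initial; rewrite // !inE eqxx !orbT.
have <- : lower_sum r' V = ineq_setfun V.
  by apply: lower_sum_initial => //; apply: chain_rank_initial; rewrite // !inE eqxx orbT.
have <- : lower_sum r' (U :&: V) = ineq_setfun (U :&: V).
  by apply: lower_sum_initial => //; apply: chain_rank_initial; rewrite // !inE eqxx.
have := o_valid _ (eta_in_PN R hG); rewrite dot_eta (bigID (mem (V :\: U))) /=.
under eq_bigr => a ha do rewrite G_lower ha.
under [X in _ + X]eq_bigr => a ha do rewrite G_lower (negbTE ha).
have := sum_coef_lower ir; rewrite (bigID (mem (V :\: U))) /=.
have -> : lower_sum r' V = lower_sum r' (U :&: V) + \sum_(a in V :\: U) coef o a (lower r' a).
  by rewrite /lower_sum (big_setID U) setIC.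
have -> : lower_sum r (U :|: V) = lower_sum r U + \sum_(a in V :\: U) coef o a (lower r a).
  by rewrite /lower_sum (big_setID U) setUK setDUl setDv set0U.
lra.
Qed.

End FromInequality.

Section Correspondence.
Variables (N : finType) (R : realFieldType).
Local Open Scope ring_scope.

Lemma standardized_eq_incr (m1 m2 : {ffun {set N} -> R}) :
  standardized m1 -> standardized m2 ->
  (forall a (B : {set N}), a \notin B -> incr m1 a B = incr m2 a B) -> m1 = m2.
Proof.
move=> h1 h2 hincr; apply/ffunP => S; move: {2}#|S| (leqnn #|S|) => n.
elim: n S => [|n IH] S hS; first by rewrite h1 ?h2 // (leq_trans hS).
have [->|/set0Pn [a ha]] := eqVneq S set0; first by rewrite h1 ?h2 ?cards0.
have hSa : (#|S :\ a| <= n)%N by move: hS; rewrite (cardsD1 a S) ha.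
by move: (hincr a (S :\ a) (negbT (setD11 a S))); rewrite /incr setD1K // (IH _ hSa) => /addIr.
Qed.

Lemma corr_sum (I : finType) (c : I -> R) (os : I -> {ffun Ups N -> R}) (us : I -> R)
    (ms : I -> {ffun {set N} -> R}) :
  (forall i, corr (os i) (us i) (ms i)) ->
  corr [ffun v => \sum_i c i * os i v] (\sum_i c i * us i) [ffun S => \sum_i c i * ms i S].
Proof.
move=> hcorr; split=> [v|H hH].
  by rewrite !ffunE -sumrB; apply: eq_bigr => i _; rewrite (hcorr i).1 mulrBr.
rewrite /dot; under [RHS]eq_bigr do rewrite ffunE mulr_suml.
rewrite [RHS]exchange_big; apply: eq_bigr => i _.
by rewrite ((hcorr i).2 H hH) /dot mulr_sumr; apply: eq_bigr => v _; rewrite mulrA.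
Qed.

End Correspondence.

Unset Implicit Arguments.
Local Open Scope ring_scope.

Theorem lemma7 (R : realFieldType) (N : finType) (hN : (1 < #|N|)%N) :
  (* characterization *)
  (forall (o : {ffun Ups N -> R}) (u : R),
      (valid_ineq o u /\ tight_full o u) <->
      (exists m : {ffun {set N} -> R},
          standardized m /\ supermodular m /\ corr o u m))
  /\
  (* one-to-one: m determines (o,u) ... *)
  (forall (o1 o2 : {ffun Ups N -> R}) (u1 u2 : R) (m : {ffun {set N} -> R}),
      standardized m -> corr o1 u1 m -> corr o2 u2 m -> o1 = o2 /\ u1 = u2)
  /\
  (* ... and (o,u) determines the standardized m *)
  (forall (o : {ffun Ups N -> R}) (u : R) (m1 m2 : {ffun {set N} -> R}),
      standardized m1 -> standardized m2 -> corr o u m1 -> corr o u m2 -> m1 = m2)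
  /\
  (* conic combinations are preserved *)
  (forall (k : nat) (c : 'I_k -> R) (os : 'I_k -> {ffun Ups N -> R})
          (us : 'I_k -> R) (ms : 'I_k -> {ffun {set N} -> R}),
      (forall i, 0 <= c i) ->
      (forall i, corr (os i) (us i) (ms i)) ->
      corr [ffun v => \sum_(i < k) c i * os i v] (\sum_(i < k) c i * us i)
           [ffun S => \sum_(i < k) c i * ms i S]).
Proof.
have enum_full := full_ranked_graph (@enum_index_inj N).
split; [|split; [|split]].
- move=> o u; split=> [[o_valid o_tight]|[m [m_std [m_sup m_corr]]]].
    exists (ineq_setfun o); split; first exact: ineq_setfun_std.
    split; first exact: ineq_setfun_super o_tight o_valid.
    by split=> [v|H hH]; [exact: ineq_setfun_incr o_tight v|rewrite o_tight].
  exact: (corr_valid_tight m_std m_sup m_corr).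
- move=> o1 o2 u1 u2 m _ [ho1 hu1] [ho2 hu2].
  have eo : o1 = o2 by apply/ffunP => v; rewrite ho1 ho2.
  by split; rewrite // (hu1 _ enum_full) (hu2 _ enum_full) eo.
- move=> o u m1 m2 h1 h2 [ho1 _] [ho2 _]; apply: standardized_eq_incr => // a B ha.
  by rewrite -(coef_incr h1 ho1 ha) (coef_incr h2 ho2 ha).
- by move=> k c os us ms _; apply: corr_sum.
Qed.
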